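(* Let $\alpha,\beta$ be $H$-colorings of $G$ and let $S=\sigma_0,\dots,\sigma_l$ be an $H$-recoloring sequence with $\sigma_0=\alpha$ and $\sigma_l=\beta$ whose length $l$ is minimum among all such sequences. Then for every vertex $v\in V(G)$, the walk $S(v)$ is reduced.
   Context: All graphs are finite and undirected. $G$ is a connected loopless graph with at least one edge. $H$ is a connected graph with at least one edge, possibly with loops, having the monochromatic neighborhood property: for all $a,b\in V(H)$, $|N_H(a)\cap N_H(b)|\le 1$, where $N_H(a)=\{w: aw\in E(H)\}$. An $H$-coloring of $G$ is a map $\sigma:V(G)\to V(H)$ such that $uv\in E(G)$ implies $\sigma(u)\sigma(v)\in E(H)$. An $H$-recoloring sequence is a sequence $\sigma_0,\dots,\sigma_l$ of $H$-colorings of $G$ in which consecutive colorings differ in the color of exactly one vertex; its length is $l$. An oriented edge is an ordered pair $(x,y)$ with $xy$ an edge; $(x,y)^{-1}=(y,x)$. A walk is a sequence of oriented edges, each starting where the previous ends; $\varepsilon$ is the empty walk. A walk is reduced if no two consecutive edges $e_ie_{i+1}$ satisfy $e_{i+1}=e_i^{-1}$. Vertex walks: in a one-step sequence $\sigma_0,\sigma_1$ where vertex $w$ changes from $a$ to $b\ne a$, all neighbors of $w$ have a common color $h$ (the unique element of $N_H(a)\cap N_H(b)$); set $S(w)=(a,h)(h,b)$ and $S(v)=\varepsilon$ for $v\ne w$. For the empty sequence $S(v)=\varepsilon$; for longer sequences $S(v)$ is the concatenation of the one-step walks in order. *)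

From mathcomp Require Import all_boot.
Set Implicit Arguments. Unset Strict Implicit. Unset Printing Implicit Defensive.

(* G : vertex type V (finType) with symmetric irreflexive edge relation eG.
   H : vertex type W (finType) with symmetric edge relation eH (loops allowed). *)

Definition connected_rel (T : finType) (e : rel T) : Prop :=
  forall x y : T, connect e x y.

Definition has_edge (T : finType) (e : rel T) : Prop :=
  exists x y : T, e x y.

Definition mono_nbhd (W : finType) (eH : rel W) : Prop :=
  forall a b : W, a != b -> #|[set w | eH a w & eH b w]| <= 1.

Definition Hcoloring (V W : finType) (eG : rel V) (eH : rel W)
  (sigma : {ffun V -> W}) : Prop :=
  forall u v : V, eG u v -> eH (sigma u) (sigma v).

Definition one_step (V W : finType) (s0 s1 : {ffun V -> W}) : Prop :=
  exists w : V, s0 w != s1 w /\ forall v : V, v != w -> s0 v = s1 v.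

(* An H-recoloring sequence sigma_0 = s0, sigma_1, ..., sigma_l given as s0 :: rest;
   its length is size rest. *)
Fixpoint recoloring_seq (V W : finType) (eG : rel V) (eH : rel W)
  (s0 : {ffun V -> W}) (rest : seq {ffun V -> W}) : Prop :=
  match rest with
  | [::] => Hcoloring eG eH s0
  | s1 :: r => Hcoloring eG eH s0 /\ one_step s0 s1 /\ recoloring_seq eG eH s1 r
  end.

Definition oedge (W : Type) := (W * W)%type.
Definition walk (W : Type) := seq (oedge W).
Definition oinv (W : Type) (e : oedge W) : oedge W := (e.2, e.1).

Definition reduced (W : Type) (p : walk W) : Prop :=
  forall (e0 : oedge W) (i : nat), i.+1 < size p ->
    nth e0 p i.+1 <> oinv (nth e0 p i).

(* the one-step walk of v: if v changes from a to b, (a,h)(h,b) where h is the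
   unique element of N_H(a) ∩ N_H(b); otherwise the empty walk *)
Definition step_walk (V W : finType) (eH : rel W) (v : V)
  (s0 s1 : {ffun V -> W}) : walk W :=
  let a := s0 v in let b := s1 v in
  if a != b then
    match [pick h | eH a h && eH b h] with
    | Some h => [:: (a, h); (h, b)]
    | None => [::]
    end
  else [::].

Fixpoint Swalk (V W : finType) (eH : rel W) (v : V)
  (s0 : {ffun V -> W}) (rest : seq {ffun V -> W}) : walk W :=
  match rest with
  | [::] => [::]
  | s1 :: r => step_walk eH v s0 s1 ++ Swalk eH v s1 r
  end.

From mathcomp Require Import all_boot zify.
From Stdlib Require Import Classical.

Set Implicit Arguments. Unset Strict Implicit. Unset Printing Implicit Defensive.

(* If S(v) is not reduced, the cancellation happens across two consecutive
   recolorings of v, at steps i < j, and at both steps all neighbours of v carry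
   the same colour h (the unique common neighbour of the colours involved).
   If no neighbour of v is recoloured strictly between i and j, keep v at its
   colour of step i until step j: the recoloring at step i becomes void, so the
   sequence can be shortened, contradicting minimality.  Otherwise some
   neighbour u is recoloured twice in a row while v stays fixed, and since all
   neighbours of u then have v's colour, this is again such a backtrack, for u,
   inside a strictly smaller window. *)

Section Changes.
Variables (T : eqType) (f : nat -> T).

Lemma const_on_interval p q :
  (forall t, p <= t < q -> f t = f t.+1) -> forall t, p <= t <= q -> f t = f p.
Proof.
move=> stable; elim=> [|t IH] /andP[le_pt lt_tq].
  by move: le_pt; rewrite leqn0 => /eqP ->.
have [-> // | ne_pt] := eqVneq p t.+1.
have le_pt' : p <= t by rewrite -ltnS ltn_neqAle ne_pt.
by rewrite -stable ?le_pt' // IH // le_pt' ltnW.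
Qed.

Lemma ex_first_change p q t0 : p <= t0 < q -> f t0 != f t0.+1 ->
  exists t1, [/\ p <= t1 < q, f t1 != f t1.+1 & forall t, p <= t < t1 -> f t = f t.+1].
Proof.
move=> t0_in ch0.
have ex : exists t, (p <= t < q) && (f t != f t.+1) by exists t0; rewrite t0_in ch0.
case: (ex_minnP ex) => t1 /andP[t1_in ch1] t1_min.
exists t1; split=> // t /andP[le_pt lt_tt1].
apply/eqP/negPn/negP => ch.
have /t1_min : (p <= t < q) && (f t != f t.+1).
  by case/andP: t1_in => _ lt_t1q; rewrite le_pt ch (ltn_trans lt_tt1).
by rewrite leqNgt lt_tt1.
Qed.

Lemma ex_consecutive_changes p q t0 : f p = f q -> p <= t0 < q -> f t0 != f t0.+1 ->
  exists t1 t2, [/\ p <= t1 < t2, t2 < q, f t1 != f t1.+1, f t2 != f t2.+1 &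
    forall t, t1 < t < t2 -> f t = f t.+1].
Proof.
move=> fpq t0_in ch0.
have [t1 [/andP[le_pt1 lt_t1q] ch1 before_t1]] := ex_first_change t0_in ch0.
have ft1 : f t1 = f p by apply: (const_on_interval before_t1); rewrite le_pt1 leqnn.
have [[t [t_in cht]] | none] :=
  classic (exists t, t1 < t < q /\ f t != f t.+1); last first.
  case/negP: ch1; rewrite ft1 fpq; apply/eqP.
  apply: (@const_on_interval t1.+1 q) => [t t_in|]; last by rewrite lt_t1q leqnn.
  apply/eqP/negPn/negP => cht; exact: none (ex_intro _ t (conj t_in cht)).
have [t2 [/andP[lt_t1t2 lt_t2q] ch2 between]] := ex_first_change t_in cht.
by exists t1, t2; rewrite le_pt1 lt_t1t2.
Qed.

End Changes.

Section Recoloring.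
Variables (V W : finType) (eG : rel V) (eH : rel W).
Hypotheses (eG_sym : symmetric eG) (eG_irr : irreflexive eG)
  (eH_sym : symmetric eH) (H_mono : mono_nbhd eH).

Local Notation coloring := {ffun V -> W}.
Implicit Types (f : nat -> coloring) (r : seq coloring).

Lemma common_nbr_uniq a b x y :
  a != b -> eH a x -> eH b x -> eH a y -> eH b y -> x = y.
Proof.
move=> ne_ab ax bx ay b_y.
by apply: (card_le1_eqP (H_mono ne_ab)); rewrite inE ?ax ?bx ?ay ?b_y.
Qed.

Lemma edge_neq x y : eG x y -> y != x.
Proof. by apply: contraTneq => ->; rewrite eG_irr. Qed.

Lemma one_step_fixed (s0 s1 : coloring) x y :
  one_step s0 s1 -> s0 x != s1 x -> y != x -> s0 y = s1 y.
Proof.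
case=> w [_ fixed] ch_x ne_yx; have [xw | ne_xw] := eqVneq x w.
  by apply: fixed; rewrite -xw.
by move: ch_x; rewrite fixed ?eqxx.
Qed.

Lemma one_step_nbr_color (s0 s1 : coloring) x u u' :
  Hcoloring eG eH s0 -> Hcoloring eG eH s1 -> one_step s0 s1 -> s0 x != s1 x ->
  eG x u -> eG x u' -> s0 u = s0 u'.
Proof.
move=> col0 col1 step ch xu xu'.
have fu := one_step_fixed step ch (edge_neq xu).
have fu' := one_step_fixed step ch (edge_neq xu').
by apply: (common_nbr_uniq ch);
  [apply: col0 | rewrite fu; apply: col1 | apply: col0 | rewrite fu'; apply: col1].
Qed.

Lemma step_walk_recolor (s0 s1 : coloring) x u :
  Hcoloring eG eH s0 -> Hcoloring eG eH s1 -> one_step s0 s1 -> s0 x != s1 x ->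
  eG x u -> step_walk eH x s0 s1 = [:: (s0 x, s0 u); (s0 u, s1 x)].
Proof.
move=> col0 col1 step ch xu.
have c0 : eH (s0 x) (s0 u) by apply: col0.
have c1 : eH (s1 x) (s0 u) by rewrite (one_step_fixed step ch (edge_neq xu)); apply: col1.
rewrite /step_walk ch; case: pickP => [h /andP[h0 h1] | none].
  by rewrite (common_nbr_uniq ch h0 h1 c0 c1).
by have := none (s0 u); rewrite c0 c1.
Qed.

Lemma step_walk_fixed (s0 s1 : coloring) x : s0 x = s1 x -> step_walk eH x s0 s1 = [::].
Proof. by rewrite /step_walk => ->; rewrite eqxx. Qed.

Definition coloring_at (s0 : coloring) r t := nth (last s0 r) (s0 :: r) t.

Definition recoloring_fun f l :=
  (forall t, t <= l -> Hcoloring eG eH (f t)) /\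
  (forall t, t < l -> one_step (f t) (f t.+1)).

Definition lazy_recoloring_fun f l :=
  (forall t, t <= l -> Hcoloring eG eH (f t)) /\
  (forall t, t < l -> f t = f t.+1 \/ one_step (f t) (f t.+1)).

Lemma recoloring_fun_behead f l :
  recoloring_fun f l.+1 -> recoloring_fun (fun t => f t.+1) l.
Proof. by case=> col step; split=> t; [apply: (col t.+1) | apply: (step t.+1)]. Qed.

Lemma recoloring_seq_fun (s0 : coloring) r :
  recoloring_seq eG eH s0 r -> recoloring_fun (coloring_at s0 r) (size r).
Proof.
elim: r s0 => [|s1 r IH] s0 /=; first by move=> col0; split=> // -[].
case=> col0 [step0 /IH[col step]].
by split=> -[|t] //=; [apply: col | apply: step].
Qed.

Lemma coloring_at_last (s0 : coloring) r : coloring_at s0 r (size r) = last s0 r.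
Proof. by rewrite /coloring_at -last_nth. Qed.

Lemma lazy_recoloring_seq f l : lazy_recoloring_fun f l ->
  exists r, [/\ recoloring_seq eG eH (f 0) r, last (f 0) r = f l, size r <= l &
    (exists2 k, k < l & f k = f k.+1) -> size r < l].
Proof.
elim: l f => [|l IH] f [col step].
  by exists [::]; split=> //; [apply: col | case].
have [|r [r_rec r_last r_size r_stutter]] := IH (fun t => f t.+1).
  by split=> t lt_tl; [apply: (col t.+1) | apply: (step t.+1)].
case: (step 0 isT) => [f01 | step0].
  by exists r; rewrite f01 ltnS leqW.
exists (f 1 :: r); split=> //=; first by split; [apply: col | split].
case=> -[|k] lt_kl fk; last by rewrite ltnS r_stutter //; exists k.
by case: step0 => w [+ _]; rewrite fk eqxx.
Qed.

Definition backtrack f l v i j :=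
  [/\ i < j < l, f i v != f i.+1 v, f j v != f j.+1 v,
      forall t, i < t < j -> f t v = f t.+1 v &
      forall u, eG v u -> f i u = f j u].

Lemma backtrack_behead f l v i j :
  backtrack (fun t => f t.+1) l v i j -> backtrack f l.+1 v i.+1 j.+1.
Proof.
by case=> ijl chi chj between nbrs; split=> // -[|t] //; apply: between.
Qed.

Lemma Swalk_head v u (vu : eG v u) (s0 : coloring) r e p :
  recoloring_fun (coloring_at s0 r) (size r) -> Swalk eH v s0 r = e :: p ->
  exists j, [/\ j < size r,
    forall t, t < j -> coloring_at s0 r t v = coloring_at s0 r t.+1 v,
    coloring_at s0 r j v != coloring_at s0 r j.+1 v,
    e.1 = coloring_at s0 r j v & forall w, eG v w -> coloring_at s0 r j w = e.2].
Proof.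
elim: r s0 => [|s1 r IH] s0 //= f_rec.
have [[col step] /IH {}IH] := (f_rec, recoloring_fun_behead f_rec).
have col0 := col 0 isT; have col1 := col 1 isT; have step0 := step 0 isT.
have [ch | fix0] := boolP (s0 v != s1 v).
  rewrite (step_walk_recolor col0 col1 step0 ch vu) => -[<- _].
  by exists 0; split=> // w vw; apply: (one_step_nbr_color col0 col1 step0 ch).
move/negPn/eqP: fix0 => fix0.
rewrite step_walk_fixed // => /IH[j [lt_jr before ch e1 e2]].
by exists j.+1; split=> // -[|t] //; apply: before.
Qed.

Lemma reduced_step_cons (a h b : W) p : a != b -> reduced p ->
  (forall e q, p = e :: q -> e <> (b, h)) -> reduced ((a, h) :: (h, b) :: p).
Proof.
move=> ne_ab red_p head_p e0 [|[|i]] //= lt_i.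
- by case=> ab; rewrite ab eqxx in ne_ab.
- by case: p red_p head_p lt_i => // e q _ /(_ e q erefl).
- exact: red_p.
Qed.

Lemma Swalk_reduced_or_backtrack v u (vu : eG v u) (s0 : coloring) r :
  recoloring_fun (coloring_at s0 r) (size r) ->
  reduced (Swalk eH v s0 r) \/ exists i j, backtrack (coloring_at s0 r) (size r) v i j.
Proof.
elim: r s0 => [|s1 r IH] s0 f_rec; first by left=> e0 i.
have [[col step] f'_rec] := (f_rec, recoloring_fun_behead f_rec).
have col0 := col 0 isT; have col1 := col 1 isT; have step0 := step 0 isT.
case: (IH s1 f'_rec) => [red | [i [j bt]]]; last first.
  by right; exists i.+1, j.+1; apply: backtrack_behead.
have [ch | fix0] := boolP (s0 v != s1 v); last first.
  by left; rewrite /= step_walk_fixed ?cat0s //; apply/eqP; rewrite negbK in fix0.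
rewrite /= (step_walk_recolor col0 col1 step0 ch vu) /=.
case E: (Swalk eH v s1 r) red => [|e p] red.
  by left; apply: reduced_step_cons.
have [back | ne_e] := eqVneq e (s1 v, s0 u); last first.
  by left; apply: reduced_step_cons => // _ _ [<- _]; apply/eqP.
have [j [lt_jr before chj _ ej2]] := Swalk_head vu f'_rec E.
right; exists 0, j.+1; split=> //= [t /andP[lt0t lt_tj] | w vw].
  by case: t lt0t lt_tj => // t _; apply: before.
rewrite ej2 // back /=; exact: (one_step_nbr_color col0 col1 step0 ch).
Qed.

Definition recolor (s : coloring) x c : coloring := [ffun y => if y == x then c else s y].

Lemma recolor_coloring s x c : Hcoloring eG eH s ->
  (forall y, eG x y -> eH c (s y)) -> Hcoloring eG eH (recolor s x c).
Proof.
move=> col nbrs y z yz; rewrite !ffunE.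
have [yx | ne_yx] := eqVneq y x; have [zx | ne_zx] := eqVneq z x; subst.
- by rewrite eG_irr in yz.
- exact: nbrs.
- by rewrite eH_sym nbrs // eG_sym.
- exact: col.
Qed.

Lemma recolor_one_step (s0 s1 : coloring) x c : one_step s0 s1 -> s0 x = s1 x ->
  one_step (recolor s0 x c) (recolor s1 x c).
Proof.
case=> w [ch_w fixed] fix_x.
have ne_wx : w != x by apply: contraNneq ch_w => ->; apply/eqP.
exists w; rewrite /recolor !ffunE (negbTE ne_wx); split=> // y ne_yw; rewrite !ffunE.
by case: eqP => // _; apply: fixed.
Qed.

Lemma recolor_at_step (s0 s1 : coloring) x c : one_step s0 s1 -> s0 x != s1 x ->
  recolor s0 x c = s1 \/ one_step (recolor s0 x c) s1.
Proof.
move=> step ch; have [-> | ne_c] := eqVneq c (s1 x).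
  left; apply/ffunP => y; rewrite /recolor ffunE.
  by case: eqVneq => [-> | /(one_step_fixed step ch)].
right; exists x; rewrite /recolor ffunE eqxx; split=> // y ne_yx.
by rewrite /recolor ffunE (negbTE ne_yx); apply: one_step_fixed step ch ne_yx.
Qed.

Section Hold.
Variables (f : nat -> coloring) (l : nat) (v : V) (i j : nat).
Hypotheses (f_rec : recoloring_fun f l) (bt : backtrack f l v i j)
  (nbrs_frozen : forall u t, eG v u -> i < t < j -> f t u = f t.+1 u).

Definition hold t := if i < t <= j then recolor (f t) v (f i v) else f t.

Lemma hold_in t : i < t <= j -> hold t = recolor (f t) v (f i v).
Proof. by rewrite /hold => ->. Qed.

Lemma hold_out t : t <= i \/ j < t -> hold t = f t.
Proof. by rewrite /hold; case: ifP => // /andP[? ?] t_out; exfalso; case: t_out; lia. Qed.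

Lemma nbrs_const u t : eG v u -> i <= t <= j -> f t u = f i u.
Proof.
move=> vu; apply: (@const_on_interval _ (fun t => f t u)) => t' /andP[le_it' lt_t'j].
have [<- | ne_it'] := eqVneq i t'.
  case: bt => /andP[lt_ij lt_jl] chi _ _ _; have [_ step] := f_rec.
  exact: one_step_fixed (step i (ltn_trans lt_ij lt_jl)) chi (edge_neq vu).
by apply: nbrs_frozen; rewrite // ltn_neqAle ne_it' le_it' lt_t'j.
Qed.

Lemma hold_stutter : hold i = hold i.+1.
Proof.
have [_ step] := f_rec; case: bt => /andP[lt_ij lt_jl] chi _ _ _.
have i1_in : i < i.+1 <= j by rewrite ltnSn.
rewrite (hold_in i1_in) hold_out ?leqnn; last by left.
apply/ffunP => x; rewrite /recolor ffunE.
case: eqVneq => [-> // | ne_xv].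
exact: one_step_fixed (step i (ltn_trans lt_ij lt_jl)) chi ne_xv.
Qed.

Lemma hold_lazy : lazy_recoloring_fun hold l.
Proof.
have [col step] := f_rec; case: bt => /andP[lt_ij lt_jl] chi chj v_frozen _.
split=> t le_tl.
  have [t_in | t_out] := boolP (i < t <= j); last first.
    by rewrite hold_out; [apply: col | move: t_out; rewrite negb_and -!ltnNge; lia].
  have [lt_it le_tj] := andP t_in.
  rewrite hold_in //; apply: recolor_coloring => [|u vu]; first exact: col.
  rewrite (nbrs_const vu) ?(ltnW lt_it) ?le_tj //.
  by apply: (col i); rewrite // ltnW // (ltn_trans lt_ij).
case: (ltngtP i t) => [lt_it | lt_ti | <-].
- case: (ltngtP t j) => [lt_tj | lt_jt | eq_tj]; last rewrite eq_tj in lt_it le_tl *.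
  + have [t_in t1_in] : i < t <= j /\ i < t.+1 <= j by split; apply/andP; lia.
    right; rewrite !hold_in //.
    by apply: recolor_one_step (step t le_tl) (v_frozen t _); rewrite lt_it.
  + by right; rewrite !hold_out; [apply: step | lia | lia].
  + have j_in : i < j <= j by rewrite lt_it leqnn.
    by rewrite hold_in // hold_out; [apply: recolor_at_step (step j lt_jl) chj | lia].
- by right; rewrite !hold_out; [apply: step | lia | lia].
- by left; apply: hold_stutter.
Qed.

Lemma hold_shortens :
  exists r, [/\ recoloring_seq eG eH (f 0) r, last (f 0) r = f l & size r < l].
Proof.
have [r [r_rec r_last _ r_short]] := lazy_recoloring_seq hold_lazy.
case: bt => /andP[lt_ij lt_jl] _ _ _ _.
have [h0 hl] : hold 0 = f 0 /\ hold l = f l by split; apply: hold_out; lia.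
exists r; rewrite -h0 -hl; split=> //; apply: r_short; exists i; [lia | exact: hold_stutter].
Qed.

End Hold.

Lemma backtrack_descend f l v i j u t0 : recoloring_fun f l -> backtrack f l v i j ->
  eG v u -> i < t0 < j -> f t0 u != f t0.+1 u ->
  exists t1 t2, [/\ i < t1, t2 < j & backtrack f l u t1 t2].
Proof.
move=> [col step] [/andP[lt_ij lt_jl] chi _ v_frozen nbrs_ij] vu t0_in ch0.
have fu : f i.+1 u = f j u.
  by rewrite -(one_step_fixed (step i (ltn_trans lt_ij lt_jl)) chi (edge_neq vu)) nbrs_ij.
have [t1 [t2 [/andP[le_t1 lt_t12] lt_t2j ch1 ch2 u_frozen]]] :=
  ex_consecutive_changes (f := fun t => f t u) fu t0_in ch0.
have v_const t : i < t <= j -> f t v = f i.+1 v.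
  exact: (const_on_interval (f := fun t => f t v) v_frozen).
have [lt_t1l lt_t2l] : t1 < l /\ t2 < l by split; lia.
exists t1, t2; split=> //; split=> //; first by rewrite lt_t12.
move=> w uw; have uv : eG u v by rewrite eG_sym.
rewrite (one_step_nbr_color (col t1 (ltnW lt_t1l)) (col t1.+1 lt_t1l) (step t1 lt_t1l)
  ch1 uw uv).
rewrite (one_step_nbr_color (col t2 (ltnW lt_t2l)) (col t2.+1 lt_t2l) (step t2 lt_t2l)
  ch2 uw uv).
by rewrite !v_const //; apply/andP; lia.
Qed.

Lemma backtrack_shortens f l v i j : recoloring_fun f l -> backtrack f l v i j ->
  exists r, [/\ recoloring_seq eG eH (f 0) r, last (f 0) r = f l & size r < l].
Proof.
move=> f_rec; have [n] := ubnP (j - i); elim: n v i j => // n IH v i j lt_ji bt.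
have [[u [t0 [vu t0_in ch0]]] | frozen] :=
  classic (exists u t, [/\ eG v u, i < t < j & f t u != f t.+1 u]).
  have [t1 [t2 [lt_it1 lt_t2j bt']]] := backtrack_descend f_rec bt vu t0_in ch0.
  have [/andP[lt_t12 _] _ _ _ _] := bt'.
  by apply: IH bt'; lia.
apply: (hold_shortens f_rec bt) => u t vu t_in; apply/eqP/negPn/negP => ch.
by apply: frozen; exists u, t.
Qed.

Lemma connected_has_nbr : connected_rel eG -> has_edge eG -> forall v, exists u, eG v u.
Proof.
move=> G_conn [x [y xy]] v; case/connectP: (G_conn v x) => -[|z p] /= path_vx xv.
  by exists y; rewrite -xv.
by exists z; case/andP: path_vx.
Qed.

End Recoloring.

Theorem mainTheorem7 (V W : finType) (eG : rel V) (eH : rel W)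
  (eG_sym : symmetric eG) (eG_irr : irreflexive eG)
  (G_conn : connected_rel eG) (G_edge : has_edge eG)
  (eH_sym : symmetric eH) (H_conn : connected_rel eH) (H_edge : has_edge eH)
  (H_mono : mono_nbhd eH)
  (alpha beta : {ffun V -> W}) (rest : seq {ffun V -> W})
  (Hseq : recoloring_seq eG eH alpha rest)
  (Hend : last alpha rest = beta)
  (Hmin : forall rest' : seq {ffun V -> W},
      recoloring_seq eG eH alpha rest' -> last alpha rest' = beta ->
      size rest <= size rest') :
  forall v : V, reduced (Swalk eH v alpha rest).
Proof.
move=> v; have [u vu] := connected_has_nbr G_conn G_edge v.
have f_rec := recoloring_seq_fun Hseq.
case: (Swalk_reduced_or_backtrack eG_irr H_mono vu f_rec) => // -[i [j bt]].
have [r [r_rec r_last r_short]] := backtrack_shortens eG_sym eG_irr eH_sym H_mono f_rec bt.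
rewrite coloring_at_last Hend in r_last.
by have := Hmin r r_rec r_last; rewrite leqNgt r_short.
Qed.
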